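(* Let $V$ be a finite ground set with $n=|V|$, let $f:2^V\to\mathbb{R}_{\ge 0}$ be monotone submodular, let $k\ge 1$ be an integer with $n\ge 16k$, and let $OPT=\max_{A\subseteq V,|A|\le k} f(A)$. Let $\tau=\frac{OPT}{2k}$. Draw a random set $S\subseteq V$ containing each element independently with probability $p=4\sqrt{k/n}$, and partition $V$ at random into sets $V_1,\dots,V_m$. Let $G_0=\textsc{ThresholdGreedy}(S,\emptyset,\tau)$, and for each $i$ let $R_i=\textsc{ThresholdFilter}(V_i,G_0,\tau)$ if $|G_0|<k$ and $R_i=\emptyset$ otherwise (the sets $R_i$ are the elements sent to the central machine). Then there is an absolute constant $c>0$ such that, with probability at least $1-e^{-ck}$, the number of elements sent to the central machine satisfies $\big|\bigcup_{i=1}^m R_i\big|\le\sqrt{nk}$.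
   Context: A function $f:2^V\to\mathbb{R}_{\ge0}$ is submodular if $f(A\cup\{e\})-f(A)\ge f(B\cup\{e\})-f(B)$ for all $A\subseteq B\subseteq V$ and $e\notin B$, and monotone if $f(A\cup\{e\})-f(A)\ge 0$ for all $A$ and $e\notin A$. For $A\subseteq V$, $e\in V$ write $f_A(e)=f(A\cup\{e\})-f(A)$. Fix a total order on $V$; all sets are scanned in this order. $\textsc{ThresholdGreedy}(T,G,\tau)$: start with $G'=G$; scan $e\in T$ in the fixed order, and whenever $f_{G'}(e)\ge\tau$ and $|G'|<k$, add $e$ to $G'$; return $G'$. $\textsc{ThresholdFilter}(T,G,\tau)$ returns $\{e\in T: f_G(e)\ge\tau\}$. Here $m$ is the number of machines (the paper takes $m=\sqrt{n/k}$). *)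

From HB Require Import structures.
From mathcomp Require Import all_boot all_order all_algebra.
From mathcomp Require Import all_classical all_reals all_analysis.
Set Implicit Arguments. Unset Strict Implicit. Unset Printing Implicit Defensive.
Import Order.TTheory GRing.Theory Num.Theory.
Local Open Scope ring_scope.

Section Defs.
Variables (R : realType) (V : finType).

Definition marg (f : {set V} -> R) (A : {set V}) (e : V) : R :=
  f (e |: A) - f A.

Definition nonneg_setfun (f : {set V} -> R) : Prop := forall A, 0 <= f A.

Definition monotone_setfun (f : {set V} -> R) : Prop :=
  forall (A : {set V}) (e : V), e \notin A -> 0 <= marg f A e.

Definition submodular (f : {set V} -> R) : Prop :=
  forall (A B : {set V}) (e : V), A \subset B -> e \notin B ->
    marg f B e <= marg f A e.

(* OPT = max_{|A| <= k} f A  (f is nonnegative, so the 0 default is harmless) *)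
Definition OPT (f : {set V} -> R) (k : nat) : R :=
  \big[Num.max/0]_(A : {set V} | (#|A| <= k)%N) f A.

(* the fixed total order on V is given by a duplicate-free enumeration [ord];
   a set T is scanned as the subsequence of [ord] of elements of T *)
Definition scan (ord : seq V) (T : {set V}) : seq V := [seq e <- ord | e \in T].

Definition threshold_greedy (f : {set V} -> R) (k : nat) (ord : seq V)
    (T G : {set V}) (tau : R) : {set V} :=
  foldl (fun G' e => if (tau <= marg f G' e) && (#|G'| < k)%N then e |: G' else G')
        G (scan ord T).

Definition threshold_filter (f : {set V} -> R) (T G : {set V}) (tau : R) : {set V} :=
  [set e in T | tau <= marg f G e].

(* probability of an event on the random set S, where S contains each element
   independently with probability p *)
Definition prob_sample (p : R) (E : {set V} -> bool) : R :=
  \sum_(S : {set V} | E S) p ^+ #|S| * (1 - p) ^+ (#|V| - #|S|).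

End Defs.

From HB Require Import structures.
From mathcomp Require Import all_boot all_order all_algebra.
From mathcomp Require Import all_classical all_reals all_analysis.
From mathcomp Require Import ring lra.
Import Order.TTheory GRing.Theory Num.Theory.
Local Open Scope ring_scope.

Set Implicit Arguments. Unset Strict Implicit. Unset Printing Implicit Defensive.

(* Run the greedy pass along the fixed order and call a step a candidate step
   if the scanned element clears the threshold while |G| < k.  The element is
   then accepted exactly when it lies in S, a coin of bias p independent of the
   past, so the potential 2^-(#accepted) / (1 - p/2)^(#candidates) has
   expectation at most 1.  If |G0| < k, submodularity shows that every element
   passing the final filter was a candidate when it was scanned; so more than
   sqrt(nk) = 4k/p filtered elements means more than 4k/p candidates and fewer
   than k acceptances, whence potential >= e^-k e^2k = e^k.  By Markov's
   inequality this has probability at most e^-k, so c = 1 works. *)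

Section SubsetSums.
Variables (V : finType) (T : Type) (idx : T) (op : Monoid.com_law idx).

Lemma big_subset_setU1_notin (x : V) (A : {set V}) (F : {set V} -> T) :
  x \notin A ->
  \big[op/idx]_(S : {set V} | (S \subset x |: A) && (x \notin S)) F S =
  \big[op/idx]_(S : {set V} | S \subset A) F S.
Proof. by move=> xA; apply: eq_bigl => S; rewrite -subsetD1 setU1K. Qed.

Lemma big_subset_setU1_in (x : V) (A : {set V}) (F : {set V} -> T) :
  x \notin A ->
  \big[op/idx]_(S : {set V} | (S \subset x |: A) && (x \in S)) F S =
  \big[op/idx]_(S : {set V} | S \subset A) F (x |: S).
Proof.
move=> xA; rewrite (reindex_onto (fun S => x |: S) (fun S => S :\ x)); last first.
  by move=> S /andP[_ xS]; rewrite finset.setD1K.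
apply: eq_bigl => S; rewrite setU11 andbT.
apply/andP/idP => [[xS_sub /eqP xSx]|SA].
  by rewrite -xSx -(setU1K xA) finset.setSD.
have xS : x \notin S by exact: contra (fintype.subsetP SA x) xA.
by rewrite setU1K // finset.setUS.
Qed.

End SubsetSums.

Section Sampling.
Variables (R : realType) (V : finType) (p : R).

Fixpoint sample_expect (l : seq V) (h : {set V} -> R) : R :=
  if l is x :: l' then
    p * sample_expect l' (fun S => h (x |: S)) + (1 - p) * sample_expect l' h
  else h finset.set0.

Lemma sample_expectE l h : uniq l ->
  sample_expect l h = \sum_(S : {set V} | S \subset [set x in l])
    p ^+ #|S| * (1 - p) ^+ (size l - #|S|) * h S.
Proof.
elim: l h => [|x l IH] h /=.
  move=> _; rewrite (big_pred1 finset.set0) ?cards0 ?mul1r // => S /=.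
  by rewrite finset.set_nil finset.subset0.
case/andP=> xl ul; have xl' : x \notin [set y in l] by rewrite inE.
rewrite !IH // set_cons [RHS](bigID (fun S : {set V} => x \in S)) /=.
rewrite big_subset_setU1_in // big_subset_setU1_notin // !mulr_sumr.
congr (_ + _); apply: eq_bigr => S SA.
  have xS : x \notin S by exact: contra (fintype.subsetP SA x) xl'.
  by rewrite cardsU1 xS add1n subSS exprS !mulrA.
have -> : ((size l).+1 - #|S| = (size l - #|S|).+1)%N.
  by rewrite subSn // -(card_uniqP ul) -(cardsE (mem l)) subset_leq_card.
by rewrite exprS; ring.
Qed.

Lemma eq_sample_expect_in (l : seq V) (h1 h2 : {set V} -> R) :
  (forall S : {set V}, S \subset [set x in l] -> h1 S = h2 S) ->
  sample_expect l h1 = sample_expect l h2.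
Proof.
elim: l h1 h2 => [|x l IH] h1 h2 /= h12; first by rewrite h12 ?sub0set.
congr (_ * _ + _ * _); apply: IH => S Sl; apply: h12; rewrite set_cons.
  exact: finset.setUS.
exact: fintype.subset_trans Sl (finset.subsetUr _ _).
Qed.

Lemma sample_expectZ l a h :
  sample_expect l (fun S => a * h S) = a * sample_expect l h.
Proof.
elim: l h => [|x l IH] h //=.
by rewrite (IH (fun S => h (x |: S))) IH; ring.
Qed.

Lemma sample_expect_cst l c : sample_expect l (fun=> c) = c.
Proof. by elim: l => [|x l IH] //=; rewrite IH -mulrDl addrC subrK mul1r. Qed.

End Sampling.

Section SamplingProbability.
Variables (R : realType) (V : finType) (p : R) (ord : seq V).
Hypotheses (p_ge0 : 0 <= p) (p_le1 : p <= 1).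
Hypotheses (ord_uniq : uniq ord) (ord_total : forall x : V, x \in ord).

Let sample_weight (S : {set V}) : R := p ^+ #|S| * (1 - p) ^+ (#|V| - #|S|).

Lemma sample_expect_enum h :
  sample_expect p ord h = \sum_(S : {set V}) sample_weight S * h S.
Proof.
rewrite sample_expectE //.
have -> : [set x in ord] = [set: V] by apply/setP => x; rewrite !inE ord_total.
have -> : size ord = #|V|.
  by rewrite -(card_uniqP ord_uniq); apply: eq_card => x; rewrite ord_total.
by apply: eq_bigl => S; rewrite finset.subsetT.
Qed.

Lemma prob_sample_markov (good : {set V} -> bool) (h : {set V} -> R) (a : R) :
  (forall S, 0 <= h S) -> sample_expect p ord h <= 1 -> 0 < a ->
  (forall S, ~~ good S -> a <= h S) ->
  1 - a^-1 <= prob_sample p good.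
Proof.
move=> h_ge0 Eh_le1 a_gt0 h_bad.
have w_ge0 S : 0 <= sample_weight S by rewrite mulr_ge0 ?exprn_ge0 ?subr_ge0.
have w_sum1 : \sum_(S : {set V}) sample_weight S = 1.
  rewrite -[RHS](sample_expect_cst p ord 1) sample_expect_enum.
  by apply: eq_bigr => S _; rewrite mulr1.
set bad := \sum_(S | ~~ good S) sample_weight S.
have -> : prob_sample p good = 1 - bad by rewrite -w_sum1 (bigID good) /= addrK.
suff : bad * a <= 1 by rewrite -ler_pdivlMr // mul1r; lra.
apply: le_trans Eh_le1; rewrite sample_expect_enum (bigID good) /= mulr_suml.
rewrite -[leLHS]add0r; apply: lerD.
  by apply: sumr_ge0 => S _; rewrite mulr_ge0.
by apply: ler_sum => S /h_bad; apply: ler_wpM2l.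
Qed.

End SamplingProbability.

Section ThresholdGreedyRun.
Variables (R : realType) (V : finType) (f : {set V} -> R) (k : nat) (tau : R).
Implicit Types (l : seq V) (S G : {set V}) (x y : V).

Definition candidate (G : {set V}) (x : V) : bool :=
  (tau <= marg f G x) && (#|G| < k)%N.

Definition greedy_step (S G : {set V}) (x : V) : {set V} :=
  if (x \in S) && candidate G x then x |: G else G.

Fixpoint candidates (l : seq V) (G S : {set V}) : nat :=
  if l is x :: l' then (candidate G x + candidates l' (greedy_step S G x) S)%N
  else 0%N.

Fixpoint accepted (l : seq V) (G S : {set V}) : nat :=
  if l is x :: l' then
    ((x \in S) && candidate G x + accepted l' (greedy_step S G x) S)%N
  else 0%N.

Lemma threshold_greedyE ord S G :
  threshold_greedy f k ord S G tau = foldl (greedy_step S) G ord.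
Proof.
rewrite /threshold_greedy /scan; elim: ord G => [|x l IH] G //=.
by rewrite /greedy_step /candidate; case: (x \in S); rewrite /= IH.
Qed.

Lemma greedy_run_setU1 l y S G : y \notin l ->
  [/\ foldl (greedy_step (y |: S)) G l = foldl (greedy_step S) G l,
      candidates l G (y |: S) = candidates l G S
    & accepted l G (y |: S) = accepted l G S].
Proof.
elim: l G => [|x l IH] G //=; rewrite inE negb_or => /andP[yx yl].
have step : greedy_step (y |: S) G x = greedy_step S G x.
  by rewrite /greedy_step !inE eq_sym (negbTE yx).
rewrite step; have [-> -> ->] := IH (greedy_step S G x) yl.
by rewrite !inE eq_sym (negbTE yx).
Qed.

Lemma subset_greedy_run l S G : G \subset foldl (greedy_step S) G l.
Proof.
elim: l G => [|x l IH] G //=; apply: fintype.subset_trans (IH _).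
by rewrite /greedy_step; case: ifP => // _; apply: finset.subsetUr.
Qed.

Lemma greedy_run_notin l S G y :
  y \notin l -> y \notin G -> y \notin foldl (greedy_step S) G l.
Proof.
elim: l G => [|x l IH] G //=; rewrite inE negb_or => /andP[yx yl] yG.
by apply: IH => //; rewrite /greedy_step; case: ifP; rewrite // !inE negb_or yx.
Qed.

Lemma greedy_step_notin l S G x :
  x \notin l -> {in x :: l, forall y, y \notin G} ->
  {in l, forall y, y \notin greedy_step S G x}.
Proof.
move=> xl disj y yl; rewrite /greedy_step.
case: ifP => _; last by rewrite disj ?inE ?yl ?orbT.
by rewrite !inE negb_or disj ?inE ?yl ?orbT // andbT; apply: contraNneq xl => <-.
Qed.

Lemma card_greedy_run l S G : uniq l -> {in l, forall y, y \notin G} ->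
  (accepted l G S + #|G|)%N = #|foldl (greedy_step S) G l|.
Proof.
elim: l G => [|x l IH] G //= /andP[xl ul] disj.
rewrite -IH //; last exact: greedy_step_notin.
rewrite /greedy_step; case: ifP => //= _.
by rewrite cardsU1 disj ?mem_head // add1n addSn addnS.
Qed.

Hypothesis f_submod : submodular f.

Lemma candidate_at_step l S G x : x \notin l -> x \notin G ->
  let Gf := foldl (greedy_step S) (greedy_step S G x) l in
  (#|Gf| < k)%N -> tau <= marg f Gf x -> candidate G x.
Proof.
move=> xl xG Gf Gf_lt above.
have GGf : G \subset Gf.
  apply: fintype.subset_trans (subset_greedy_run _ _ _).
  by rewrite /greedy_step; case: ifP => // _; apply: finset.subsetUr.
have [xGf|xGf] := boolP (x \in Gf).
  move: xGf; apply: contraLR => notc; apply: greedy_run_notin => //.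
  by rewrite /greedy_step (negbTE notc) andbF.
rewrite /candidate (leq_ltn_trans (subset_leq_card GGf) Gf_lt) andbT.
exact: le_trans above (f_submod GGf xGf).
Qed.

Lemma card_above_threshold_le_candidates l S G :
  uniq l -> {in l, forall y, y \notin G} ->
  let Gf := foldl (greedy_step S) G l in
  (#|Gf| < k)%N ->
  (#|[set e in l | (tau <= marg f Gf e)%R]| <= candidates l G S)%N.
Proof.
elim: l G => [|x l IH] G /=; first by rewrite leqn0 cards_eq0 finset.set_nil.
case/andP=> xl ul disj Gf_lt.
have IHx := IH _ ul (greedy_step_notin S xl disj) Gf_lt.
set Gf := foldl _ _ l in Gf_lt IHx *.
have [above|below] := boolP (tau <= marg f Gf x).
  rewrite (candidate_at_step (S := S) xl) ?disj ?mem_head // add1n.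
  apply: leq_trans (_ : #|x |: [set e in l | (tau <= marg f Gf e)%R]| <= _)%N.
    apply: subset_leq_card; apply/fintype.subsetP => e.
    by rewrite !inE => /andP[/orP[]-> ->]; rewrite ?orbT.
  by rewrite cardsU1 -add1n leq_add ?leq_b1.
apply: leq_trans (leq_addl _ _); apply: leq_trans IHx; apply: subset_leq_card.
apply/fintype.subsetP => e; rewrite !inE => /andP[/orP[/eqP->|->] //].
by rewrite (negbTE below).
Qed.

End ThresholdGreedyRun.

Section Potential.
Variables (R : realType) (V : finType) (f : {set V} -> R) (k : nat) (tau p : R).
Hypotheses (p_ge0 : 0 <= p) (p_le1 : p <= 1).
Implicit Types (l : seq V) (S G : {set V}) (x : V).

Let q : R := 1 - p / 2.

Let q_gt0 : 0 < q. Proof. have := p_le1; rewrite /q; lra. Qed.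

Definition potential l G S : R :=
  2^-1 ^+ accepted f k tau l G S / q ^+ candidates f k tau l G S.

Lemma potential_ge0 l G S : 0 <= potential l G S.
Proof. by rewrite divr_ge0 ?exprn_ge0 ?invr_ge0 ?ler0n ?ltW. Qed.

Lemma potential_cons x l G S :
  potential (x :: l) G S =
  2^-1 ^+ ((x \in S) && candidate f k tau G x) / q ^+ candidate f k tau G x *
  potential l (greedy_step f k tau S G x) S.
Proof. by rewrite /potential /= !exprD invfM mulrACA. Qed.

(* A candidate step multiplies the potential by 1/(2q) with probability p and
   by 1/q otherwise, and p/(2q) + (1-p)/q = 1. *)
Lemma sample_expect_potential l G :
  uniq l -> sample_expect p l (potential l G) <= 1.
Proof.
elim: l G => [|x l IH] G /=; first by rewrite /potential /= divr1.
case/andP=> xl ul; set c := candidate f k tau G x.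
have in_S : sample_expect p l (fun S => potential (x :: l) G (x |: S)) =
    2^-1 ^+ c / q ^+ c * sample_expect p l (potential l (if c then x |: G else G)).
  rewrite -sample_expectZ; apply: eq_sample_expect_in => S _.
  have [_ Ecand Eacc] := greedy_run_setU1 f k tau S (if c then x |: G else G) xl.
  by rewrite potential_cons /greedy_step setU11 /= -/c /potential Ecand Eacc.
have notin_S : sample_expect p l (potential (x :: l) G) =
    q ^- c * sample_expect p l (potential l G).
  rewrite -sample_expectZ; apply: eq_sample_expect_in => S Sl.
  have xS : x \notin S by apply: contra xl => /(fintype.subsetP Sl); rewrite inE.
  by rewrite potential_cons /greedy_step (negbTE xS) mul1r.
rewrite in_S notin_S {in_S notin_S}.
have E2 := IH G ul; move: (IH (if c then x |: G else G) ul).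
case: c => E1 /=; last by rewrite !expr0 invr1 !mul1r -mulrDl addrC subrK mul1r.
have mix : p * (2^-1 / q) + (1 - p) * q^-1 = 1.
  by rewrite /q; field; apply: lt0r_neq0; move: p_le1; lra.
rewrite !expr1 -[leRHS]mix.
by apply: lerD; rewrite ler_wpM2l ?subr_ge0 // ler_piMr // ?divr_ge0 ?invr_ge0 ?ltW.
Qed.

Lemma expR_le_potential_counts (A X : nat) :
  (A <= k)%N -> 4 * k%:R <= p * X%:R -> expR k%:R <= 2^-1 ^+ A / q ^+ X.
Proof.
move=> Ak pX.
have half : expR (- k%:R) <= 2^-1 ^+ A :> R.
  apply: le_trans (_ : 2^-1 ^+ k <= _); last by rewrite ler_wiXn2l // invf_le1 // ler1n.
  rewrite exprVn expRN lef_pV2 ?posrE ?expR_gt0 ?exprn_gt0 // -[k%:R]mulr1 expRM_natl.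
  by rewrite lerXn2r ?nnegrE ?expR_ge0 // -[2]/(1 + 1) expR_ge1Dx.
have geom : q ^+ X <= expR (- (2 * k%:R)).
  apply: le_trans (_ : expR (- (p / 2)) ^+ X <= _).
    by rewrite lerXn2r ?nnegrE ?expR_ge0 ?(ltW q_gt0) // /q expR_ge1Dx.
  by rewrite -expRM_natl ler_expR; move: pX; nra.
have -> : expR k%:R = expR (- k%:R) * expR (2 * k%:R) :> R.
  by rewrite -expRD; congr expR; lra.
rewrite ler_pM ?expR_ge0 // -[expR (2 * _)]invrK -expRN.
by rewrite lef_pV2 ?posrE ?expR_gt0 ?exprn_gt0.
Qed.

Lemma expR_le_potential ord S (B : R) :
  submodular f -> uniq ord -> (forall x, x \in ord) ->
  let G0 := foldl (greedy_step f k tau S) finset.set0 ord in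
  (#|G0| < k)%N -> 4 * k%:R <= p * B -> B < #|[set e | tau <= marg f G0 e]|%:R ->
  expR k%:R <= potential ord finset.set0 S.
Proof.
move=> f_submod ord_uniq ord_total G0 G0_lt pB B_lt.
have disj : {in ord, forall y, y \notin finset.set0} by move=> y _; rewrite inE.
have accA := card_greedy_run f k tau S ord_uniq disj.
rewrite cards0 addn0 -/G0 in accA.
have := card_above_threshold_le_candidates f_submod ord_uniq disj G0_lt.
have -> : [set e in ord | tau <= marg f G0 e] = [set e | tau <= marg f G0 e].
  by apply/setP => e; rewrite !inE ord_total.
move=> candX; apply: expR_le_potential_counts; first by rewrite accA ltnW.
apply: le_trans pB _; rewrite ler_wpM2l // ltW //.
by apply: lt_le_trans B_lt _; rewrite ler_nat.
Qed.

End Potential.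

Lemma sampling_rate_le1 (R : realType) (n k : nat) :
  (16 * k <= n)%N -> 4 * Num.sqrt (k%:R / n%:R) <= 1 :> R.
Proof.
case: n => [|n] kn; first by rewrite invr0 mulr0 sqrtr0 mulr0 ler01.
have n_gt0 : 0 < n.+1%:R :> R by rewrite ltr0Sn.
have ratio : k%:R / n.+1%:R <= 16^-1 :> R.
  by rewrite ler_pdivrMr // mulrC ler_pdivlMr ?ltr0n // -natrM ler_nat mulnC.
have s2 := sqr_sqrtr (divr_ge0 (ler0n R k) (ltW n_gt0)).
move: ratio s2 (sqrtr_ge0 (k%:R / n.+1%:R : R)).
set x := k%:R / n.+1%:R; set s := Num.sqrt x; nra.
Qed.

Lemma sampling_rate_mul_sqrt (R : realType) (n k : nat) : (0 < n)%N ->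
  4 * Num.sqrt (k%:R / n%:R) * Num.sqrt (n%:R * k%:R) = 4 * k%:R :> R.
Proof.
move=> n_gt0; rewrite -mulrA -sqrtrM ?divr_ge0 //.
rewrite mulrA divfK ?pnatr_eq0 -?lt0n // -expr2 sqrtr_sqr ger0_norm //.
Qed.

Theorem lemma2 (R : realType) :
  exists c : R, 0 < c /\
  forall (V : finType) (f : {set V} -> R) (k : nat)
         (ord : seq V) (m : nat) (part : V -> 'I_m),
    nonneg_setfun f -> monotone_setfun f -> submodular f ->
    (1 <= k)%N -> (16 * k <= #|V|)%N ->
    uniq ord -> (forall x : V, x \in ord) ->
    let n := #|V| in
    let tau := OPT f k / (2 * k%:R) in
    let p : R := 4 * Num.sqrt (k%:R / n%:R) in
    prob_sample p (fun S : {set V} =>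
      let G0 := threshold_greedy f k ord S (@finset.set0 V) tau in
      let Rset := fun i : 'I_m =>
        if (#|G0| < k)%N then threshold_filter f [set x | part x == i] G0 tau
        else @finset.set0 V in
      (#|\bigcup_(i < m) Rset i|%:R <= Num.sqrt (n%:R * k%:R) :> R))
    >= 1 - expR (- (c * k%:R)).
Proof.
exists 1; split; first exact: ltr01.
move=> V f k ord m part _ _ f_submod k_ge1 kn ord_uniq ord_total; cbv zeta.
set n := #|V|; set tau := OPT f k / _; set p := 4 * Num.sqrt _.
have p_ge0 : 0 <= p by rewrite mulr_ge0 ?sqrtr_ge0.
have p_le1 : p <= 1 by apply: sampling_rate_le1.
have p_sqrt : p * Num.sqrt (n%:R * k%:R) = 4 * k%:R.
  by apply: sampling_rate_mul_sqrt; rewrite (leq_trans _ kn) ?muln_gt0.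
rewrite mul1r expRN.
apply: (prob_sample_markov p_ge0 p_le1 ord_uniq ord_total
         (h := potential f k tau p ord finset.set0)).
- by move=> S; apply: potential_ge0.
- exact: sample_expect_potential.
- exact: expR_gt0.
move=> S /=.
rewrite threshold_greedyE; case: ltnP => [G0_lt|_]; last first.
  by rewrite big1_eq cards0 sqrtr_ge0.
rewrite -real_ltNge ?realE ?sqrtr_ge0 ?ler0n // => big_union.
apply: (expR_le_potential p_ge0 p_le1 (B := Num.sqrt (n%:R * k%:R))) => //.
  by rewrite p_sqrt.
apply: lt_le_trans big_union _; rewrite ler_nat; apply: subset_leq_card.
by apply/bigcupsP => i _; apply/fintype.subsetP => e; rewrite !inE => /andP[].
Qed.
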